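(* Let $q\ge2$ be even, $n\ge1$, $p\ge1$, let $\sigma$ be a permutation of $\mathbb{Z}_2^n$, and let $g:\mathbb{Z}_2^n\to\mathbb{Z}_q$ satisfy $g(y)\equiv\sum_{j=0}^{p-1}2^ja_j(y)\pmod q$ for Boolean functions $a_0,\dots,a_{p-1}$ on $\mathbb{Z}_2^n$. Let $f:\mathbb{Z}_2^n\times\mathbb{Z}_2^n\to\mathbb{Z}_q$, $f(x,y)=\frac q2\,x\cdot\sigma(y)+g(y)$, and for $i\in\{0,\dots,2^p-1\}$ let $g_i(x,y)=x\cdot\sigma(y)\oplus z_{i,0}a_0(y)\oplus\cdots\oplus z_{i,p-1}a_{p-1}(y)$, a Boolean function on $\mathbb{Z}_2^{2n}$. Then every $g_i$ is bent, and for every $u\in\mathbb{Z}_2^{2n}$ there exist $r\in\{0,\dots,2^p-1\}$ and $\epsilon\in\{\pm1\}$ with $(W_{g_0}(u),\dots,W_{g_{2^p-1}}(u))=\epsilon H^{(r)}_{2^p}$. Equivalently, for every $u$, every $t\in\{1,\dots,p\}$ and every $i\in\{0,\dots,2^{t-1}-1\}$, the product $W_{g_i}(u)W_{g_{i+2^{t-1}}}(u)\in\{\pm1\}$ depends only on $u$ and $t$ (not on $i$).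
   Context: For $i\in\{0,\dots,2^m-1\}$, $z_i=(z_{i,0},\dots,z_{i,m-1})\in\mathbb{Z}_2^m$ is the binary vector with $i=\sum_j z_{i,j}2^j$. $H_{2^m}$ is the Sylvester–Hadamard matrix with entries $(H_{2^m})_{k,i}=(-1)^{z_k\cdot z_i}$, and $H^{(r)}_{2^m}$ its $r$-th row. For a Boolean function $G$ on $\mathbb{Z}_2^{N}$, $W_G(u)=2^{-N/2}\sum_{v\in\mathbb{Z}_2^N}(-1)^{G(v)\oplus u\cdot v}$, and $G$ is bent if $|W_G(u)|=1$ for all $u$. *)

From HB Require Import structures.
From mathcomp Require Import all_boot all_order all_algebra all_fingroup all_field.
Set Implicit Arguments. Unset Strict Implicit. Unset Printing Implicit Defensive.
Import Order.TTheory GRing.Theory Num.Theory.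
Local Open Scope ring_scope.

(* Z_2^N as boolean vectors indexed by 'I_N *)
Definition bvec (N : nat) := {ffun 'I_N -> bool}.

Definition bdot (N : nat) (x y : bvec N) : bool :=
  \big[addb/false]_(k < N) (x k && y k).

(* z_{i,j}: j-th binary digit of i  (i = sum_j z_{i,j} 2^j) *)
Definition zbit (i j : nat) : bool := odd (i %/ 2 ^ j).

Definition hadamard (m k i : nat) : algC :=
  (-1) ^+ (\big[addb/false]_(j < m) (zbit k j && zbit i j) : nat).

Definition walsh (N : nat) (G : bvec N -> bool) (u : bvec N) : algC :=
  (sqrtC 2)^-1 ^+ N * \sum_(v : bvec N) (-1) ^+ (G v (+) bdot u v : nat).

Definition bent (N : nat) (G : bvec N -> bool) : Prop :=
  forall u : bvec N, `|walsh G u| = 1.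

Definition xpart (n : nat) (v : bvec (n + n)) : bvec n := [ffun k => v (lshift n k)].
Definition ypart (n : nat) (v : bvec (n + n)) : bvec n := [ffun k => v (rshift n k)].

Definition gfun (n p : nat) (sigma : {perm bvec n}) (a : 'I_p -> bvec n -> bool)
  (i : nat) (v : bvec (n + n)) : bool :=
  bdot (xpart v) (sigma (ypart v)) (+) \big[addb/false]_(j < p) (zbit i j && a j (ypart v)).

From HB Require Import structures.
From mathcomp Require Import all_boot all_order all_algebra all_fingroup all_field.
From mathcomp Require Import zify.
Set Implicit Arguments. Unset Strict Implicit. Unset Printing Implicit Defensive.
Import Order.TTheory GRing.Theory Num.Theory.
Local Open Scope ring_scope.

(* Summing over x first, the character sum over x in W_{g_i}(u) vanishes unless
   sigma(y) = x-part of u; so only y0 = sigma^-1 (x-part of u) survives and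
   W_{g_i}(u) = (-1)^(z_i . a(y0) + (y-part of u) . y0).  All three claims are
   read off this closed form: the value is a sign, the sign is the row r of
   H_{2^p} whose binary digits are the a_j(y0), and passing from i to i + 2^k
   flips exactly the term z_{i,k} a_k(y0). *)

Section Signs.
Variable R : pzRingType.

Lemma signr_bigaddb (I : Type) (r : seq I) (P : pred I) (F : I -> bool) :
  (-1) ^+ (\big[addb/false]_(i <- r | P i) F i : nat)
  = \prod_(i <- r | P i) (-1) ^+ (F i : nat) :> R.
Proof.
apply: (big_morph (fun b : bool => (-1) ^+ (b : nat) : R)) => [x y|].
  by rewrite signr_addb.
by rewrite expr0.
Qed.

Lemma signr_bool (b : bool) : (-1) ^+ (b : nat) = 1 :> R \/ (-1) ^+ (b : nat) = -1 :> R.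
Proof. by case: b; [right; rewrite expr1 | left; rewrite expr0]. Qed.

End Signs.

Definition bvxor (N : nat) (s t : bvec N) : bvec N := [ffun k => s k (+) t k].

Lemma bvxor_eq0 (N : nat) (s t : bvec N) : (bvxor s t == [ffun=> false]) = (s == t).
Proof.
apply/eqP/eqP => [st0|->]; apply/ffunP => k.
  by have := congr1 (fun f : bvec N => f k) st0; rewrite !ffunE; case: (s k); case: (t k).
by rewrite !ffunE addbb.
Qed.

Lemma bdotC (N : nat) (x y : bvec N) : bdot x y = bdot y x.
Proof. by apply: eq_bigr => k _; rewrite andbC. Qed.

Lemma bdot_bvxorr (N : nat) (x s t : bvec N) : bdot x (bvxor s t) = bdot x s (+) bdot x t.
Proof.
rewrite /bdot -big_split /=; apply: eq_bigr => k _; rewrite ffunE.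
by case: (x k); case: (s k); case: (t k).
Qed.

Lemma sum_sign_bdot (R : comPzRingType) (N : nat) (w : bvec N) :
  \sum_(x : bvec N) (-1) ^+ (bdot x w : nat) = (w == [ffun=> false])%:R * 2%:R ^+ N :> R.
Proof.
under eq_bigr do rewrite /bdot signr_bigaddb.
rewrite -(bigA_distr_bigA (fun k (b : bool) => (-1) ^+ (b && w k : nat) : R)).
under eq_bigr do rewrite big_bool /= expr0.
have [->|w_neq0] := eqVneq w [ffun=> false].
  rewrite mul1r (eq_bigr (fun _ => 2%:R)) => [|k _]; last by rewrite ffunE expr0.
  by rewrite prodr_const card_ord.
have [k wk] : exists k, w k.
  apply/existsP; apply: contraR w_neq0 => /existsPn wF; apply/eqP/ffunP => k.
  by rewrite ffunE; exact: negbTE (wF k).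
by rewrite mul0r (bigD1 k) //= wk expr1 addNr mul0r.
Qed.

Lemma sum_sign_bdot_orthogonal (R : comPzRingType) (N : nat) (s t : bvec N) :
  \sum_(x : bvec N) (-1) ^+ (bdot x s (+) bdot x t : nat) = (s == t)%:R * 2%:R ^+ N :> R.
Proof. by under eq_bigr do rewrite -bdot_bvxorr; rewrite sum_sign_bdot bvxor_eq0. Qed.

Section Halves.
Variable n : nat.

Definition bjoin (x y : bvec n) : bvec (n + n) :=
  [ffun k => match split k with inl i => x i | inr j => y j end].

Lemma xpart_bjoin (x y : bvec n) : xpart (bjoin x y) = x.
Proof. by apply/ffunP => k; rewrite !ffunE (unsplitK (inl k)). Qed.

Lemma ypart_bjoin (x y : bvec n) : ypart (bjoin x y) = y.
Proof. by apply/ffunP => k; rewrite !ffunE (unsplitK (inr k)). Qed.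

Lemma bjoin_parts (v : bvec (n + n)) : bjoin (xpart v) (ypart v) = v.
Proof.
apply/ffunP => k; rewrite ffunE -[in RHS](splitK k).
by case: (split k) => i /=; rewrite ffunE.
Qed.

Lemma bdot_parts (u v : bvec (n + n)) :
  bdot u v = bdot (xpart u) (xpart v) (+) bdot (ypart u) (ypart v).
Proof. by rewrite /bdot big_split_ord; congr (_ (+) _); apply: eq_bigr => k _; rewrite !ffunE. Qed.

Lemma sum_bvec_parts (R : nmodType) (F : bvec (n + n) -> R) :
  \sum_(v : bvec (n + n)) F v = \sum_(y : bvec n) \sum_(x : bvec n) F (bjoin x y).
Proof.
rewrite pair_big /= (reindex (fun yx : bvec n * bvec n => bjoin yx.2 yx.1)) //.
apply: onW_bij; exists (fun v => (ypart v, xpart v)) => [[y x]|v] /=.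
  by rewrite xpart_bjoin ypart_bjoin.
by rewrite bjoin_parts.
Qed.

End Halves.

Definition adot (n p : nat) (a : 'I_p -> bvec n -> bool) (i : nat) (y : bvec n) : bool :=
  \big[addb/false]_(j < p) (zbit i j && a j y).

Lemma walsh_gfun (n p : nat) (sigma : {perm bvec n}) (a : 'I_p -> bvec n -> bool)
    (i : nat) (u : bvec (n + n)) :
  let y0 := (sigma^-1)%g (xpart u) in
  walsh (gfun sigma a i) u = (-1) ^+ (adot a i y0 (+) bdot (ypart u) y0 : nat).
Proof.
move=> y0; rewrite /walsh sum_bvec_parts.
have inner y : \sum_(x : bvec n) (-1) ^+ (gfun sigma a i (bjoin x y) (+) bdot u (bjoin x y) : nat)
    = (sigma y == xpart u)%:R * 2%:R ^+ n * (-1) ^+ (adot a i y (+) bdot (ypart u) y : nat) :> algC.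
  rewrite -(sum_sign_bdot_orthogonal _ (sigma y)) mulr_suml; apply: eq_bigr => x _.
  rewrite /gfun bdot_parts !xpart_bjoin !ypart_bjoin [bdot (xpart u) x]bdotC -signr_addb.
  by congr (_ ^+ nat_of_bool _); rewrite -/(adot a i y) addbACA.
rewrite (eq_bigr _ (fun y _ => inner y)) (bigD1 y0) //= big1 => [|y y_neq]; last first.
  rewrite (_ : (sigma y == xpart u) = false) ?mul0r //.
  by apply/negbTE; apply: contra y_neq => /eqP sy; rewrite /y0 -sy permK.
have scale : (sqrtC 2)^-1 ^+ (n + n) * 2%:R ^+ n = 1 :> algC.
  by rewrite exprD -exprMn -expr2 exprVn sqrtCK -exprMn mulVf ?expr1n ?pnatr_eq0.
by rewrite addr0 /y0 permKV eqxx mul1r mulrA scale mul1r.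
Qed.

Local Open Scope nat_scope.

Lemma zbit_bit_double (b : bool) (r : nat) : zbit (b + 2 * r) 0 = b.
Proof. by rewrite /zbit expn0 divn1 oddD oddM /= addbF oddb. Qed.

Lemma zbit_bitS_double (b : bool) (r k : nat) : zbit (b + 2 * r) k.+1 = zbit r k.
Proof.
rewrite /zbit expnS divnMA [b + _]addnC [2 * r]mulnC divnMDl // (@divn_small b 2) ?addn0 //.
by case: b.
Qed.

Lemma exists_zbit (m : nat) (b : nat -> bool) :
  exists2 r, r < 2 ^ m & forall k, k < m -> zbit r k = b k.
Proof.
elim: m b => [|m IHm] b; first by exists 0.
have [r r_lt r_bits] := IHm (fun k => b k.+1).
exists (b 0 + 2 * r) => [|[|k] k_lt]; first by rewrite expnS; case: (b 0); lia.
  by rewrite zbit_bit_double.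
by rewrite zbit_bitS_double r_bits.
Qed.

Lemma zbit_addX (i k j : nat) : i < 2 ^ k -> zbit (i + 2 ^ k) j = zbit i j (+) (j == k).
Proof.
move=> i_lt; rewrite /zbit; case: (ltngtP j k) => [j_lt_k|k_lt_j|->].
- rewrite -(subnK (ltnW j_lt_k)) expnD divnDMl ?expn_gt0 // oddD oddX /=.
  by rewrite subn_eq0 leqNgt j_lt_k addbF.
- have ik_lt : i + 2 ^ k < 2 ^ j.
    apply: leq_trans (leq_pexp2l _ k_lt_j) => //.
    by rewrite expnS mul2n -addnn ltn_add2r.
  by rewrite (divn_small ik_lt) (divn_small (leq_ltn_trans (leq_addr _ _) ik_lt)).
- by rewrite -[X in i + X]mul1n divnDMl ?expn_gt0 // divn_small // addn1.
Qed.

Local Open Scope ring_scope.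

Lemma adot_addX (n p : nat) (a : 'I_p -> bvec n -> bool) (y : bvec n) (i : nat) (k : 'I_p) :
  (i < 2 ^ k)%N -> adot a (i + 2 ^ k) y = adot a i y (+) a k y.
Proof.
move=> i_lt; rewrite /adot.
under eq_bigr => j _ do rewrite zbit_addX // [(_ (+) _) && _]andb_addl.
rewrite big_split /=; congr (_ (+) _).
rewrite (bigD1 k) //= eqxx big1 ?addbF // => j j_neq_k.
by rewrite -[j == k :> nat]/(j == k) (negbTE j_neq_k).
Qed.

Lemma adot_hadamard (n p : nat) (a : 'I_p -> bvec n -> bool) (y : bvec n) (r i : nat) :
  (forall j : 'I_p, zbit r j = a j y) -> (-1) ^+ (adot a i y : nat) = hadamard p r i.
Proof. by move=> r_bits; congr (_ ^+ nat_of_bool _); apply: eq_bigr => j _; rewrite r_bits andbC. Qed.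

Theorem mainTheorem5 (q n p : nat) (hq : (2 <= q)%N) (hqeven : ~~ odd q)
  (hn : (1 <= n)%N) (hp : (1 <= p)%N)
  (sigma : {perm bvec n}) (g : bvec n -> 'Z_q) (a : 'I_p -> bvec n -> bool)
  (hg : forall y : bvec n, g y = ((\sum_(j < p) 2 ^ j * a j y)%N)%:R) :
  (forall i : nat, (i < 2 ^ p)%N -> bent (gfun sigma a i)) /\
  (forall u : bvec (n + n), exists r : nat, exists eps : algC,
      [/\ (r < 2 ^ p)%N, eps = 1 \/ eps = -1 &
          forall i : nat, (i < 2 ^ p)%N ->
            walsh (gfun sigma a i) u = eps * hadamard p r i]) /\
  (forall (u : bvec (n + n)) (t : nat), (1 <= t <= p)%N ->
      exists c : algC, (c = 1 \/ c = -1) /\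
        forall i : nat, (i < 2 ^ t.-1)%N ->
          walsh (gfun sigma a i) u * walsh (gfun sigma a (i + 2 ^ t.-1)) u = c).
Proof.
split; [|split] => [i _ u|u|u t /andP [t_ge1 t_le_p]].
- by rewrite walsh_gfun normr_sign.
- set y0 := (sigma^-1)%g (xpart u).
  have [r r_lt r_bits] := exists_zbit p (fun j => if insub j is Some k then a k y0 else false).
  exists r, ((-1) ^+ (bdot (ypart u) y0 : nat)); split => [//||i _]; first exact: signr_bool.
  rewrite walsh_gfun signr_addb mulrC (@adot_hadamard _ _ _ _ r) // => j.
  by rewrite r_bits // valK.
- set y0 := (sigma^-1)%g (xpart u).
  have k_lt_p : (t.-1 < p)%N by rewrite prednK.
  exists ((-1) ^+ (a (Ordinal k_lt_p) y0 : nat)); split => [|i i_lt]; first exact: signr_bool.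
  rewrite !walsh_gfun (@adot_addX _ _ _ _ _ (Ordinal k_lt_p)) // -signr_addb.
  by congr (_ ^+ nat_of_bool _); case: (adot _ _ _); case: (a _ _); case: (bdot _ _).
Qed.
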